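(* Let $C\in M_n(\mathbb{C})$ be a contraction and $d=\operatorname{rank}(I-C^*C)$. Then every level of the partial isometry tower of $C$ has the Circularity property if and only if $T_1,T_2,\dots,T_{d+1}$ have the Circularity property. Moreover, it is also equivalent that $T_0,T_1,\dots,T_d$ have the Circularity property.
   Context: For $X\in M_n(\mathbb{C})$, $H_X(\theta):=\frac12(e^{-i\theta}X+e^{i\theta}X^* )$; $X$ has the Circularity property if the spectrum of $H_X(\theta)$ is independent of $\theta\in\mathbb{R}$. A contraction is a matrix with $\|C\|\le1$. For a contraction $C$: $D_C=I-C^*C$, $d=\operatorname{rank}D_C$, $B_C$ is a $d\times n$ matrix of full row rank with $B_C^*B_C=D_C$ (matrix of $D_C^{1/2}$ on $\operatorname{Im}D_C$, zero on its complement), $\mathcal{A}(C)=\begin{bmatrix}0&B_C\\0&C\end{bmatrix}$, and the partial isometry tower is $T_0=C$, $T_{j+1}=\mathcal{A}(T_j)$. *)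

From HB Require Import structures.
From mathcomp Require Import all_boot all_order all_algebra.
From mathcomp Require Import complex.
From mathcomp Require Import reals trigo.
Set Implicit Arguments. Unset Strict Implicit. Unset Printing Implicit Defensive.
Import Order.TTheory GRing.Theory Num.Theory.
Local Open Scope ring_scope.
Local Open Scope complex_scope.

Section Defs.
Variable R : realType.
Local Notation C := R[i].

Definition adjmx m n (X : 'M[C]_(m, n)) : 'M[C]_(n, m) := (map_mx conjc X)^T.

Definition expi (theta : R) : C := (cos theta) +i* (sin theta).

Definition Hmx n (X : 'M[C]_n) (theta : R) : 'M[C]_n :=
  (2%:R)^-1 *: (expi (- theta) *: X + expi theta *: adjmx X).

Definition spectrum n (X : 'M[C]_n) : C -> Prop := fun a => eigenvalue X a.

Definition circularity n (X : 'M[C]_n) : Prop :=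
  forall theta1 theta2 : R, spectrum (Hmx X theta1) = spectrum (Hmx X theta2).

Definition vnorm n (v : 'cV[C]_n) : R := Num.sqrt (\sum_i (ComplexField.Normc.normc (v i 0)) ^+ 2).

Definition contraction n (X : 'M[C]_n) : Prop :=
  forall v : 'cV[C]_n, vnorm (X *m v) <= vnorm v.

Definition defect n (X : 'M[C]_n) : 'M[C]_n := 1%:M - adjmx X *m X.

Record sqmx := SqMx { sdim : nat; smat : 'M[C]_sdim }.

Definition isB n (X : 'M[C]_n) d (B : 'M[C]_(d, n)) : Prop :=
  d = \rank (defect X) /\ row_free B /\ adjmx B *m B = defect X.

Definition A_step (X Y : sqmx) : Prop :=
  exists d (B : 'M[C]_(d, sdim X)), isB (smat X) B /\
    Y = @SqMx (d + sdim X) (block_mx 0 B 0 (smat X)).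

Definition pi_tower n (X : 'M[C]_n) (T : nat -> sqmx) : Prop :=
  T 0%N = @SqMx n X /\ forall j, A_step (T j) (T j.+1).

Definition circ (Y : sqmx) : Prop := circularity (smat Y).

End Defs.

From Stdlib Require Import FunctionalExtensionality.
From HB Require Import structures.
From mathcomp Require Import all_boot all_order all_algebra.
From mathcomp Require Import complex.
From mathcomp Require Import reals trigo.
From mathcomp Require Import perm ring zify.
Set Implicit Arguments. Unset Strict Implicit. Unset Printing Implicit Defensive.
Import Order.TTheory GRing.Theory Num.Theory.
Local Open Scope ring_scope.

(* Write hpart Y e = (e^* Y + e Y^* ) / 2, so that H_Y(theta) = hpart Y (e^{i theta}),
   and D_Y = I - Y^* Y.  Since D_{A(Y)} = diag(I, 0), a Schur complement shows that
   det (a (t - hpart (A Y) e) - b D_{A(Y)}) equals det ((a t - b) (t - hpart Y e) - (a/4) D_Y)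
   up to factors independent of e.  Going down the tower, char_poly (hpart T_k e) at t is,
   up to such a factor, P_e(r_k(t)), where P_e(r) = det (t - hpart X e - r D_X) has degree
   at most d = rank D_X in r, and r_k = b_k / a_k for (a_0, b_0) = (1, 0) and
   (a_{k+1}, b_{k+1}) = (a_k t - b_k, a_k / 4).  For generic t the r_k are pairwise
   distinct, so if char_poly (hpart T_j e) does not depend on e for d + 1 consecutive j,
   then neither does P_e, and hence neither does char_poly (hpart T_k e) for any k.
   Finally, circularity of Y is the e-independence of char_poly (hpart Y e) on the unit
   circle: the spectrum leaves finitely many candidates, and e^m char_poly (hpart Y e) is
   polynomial in e, so a single candidate works on the whole circle. *)

Lemma det_scalar_block_mx (K : comNzRingType) (p q : nat) (al c c' : K)
    (B : 'M[K]_(p, q)) (B' : 'M_(q, p)) (N : 'M_q) :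
  al ^+ q * \det (block_mx al%:M (c *: B) (c' *: B') N) =
  al ^+ p * \det (al *: N - (c * c') *: (B' *m B)).
Proof.
have elim_dl : block_mx 1%:M 0 (- c' *: B') al%:M *m block_mx al%:M (c *: B) (c' *: B') N
    = block_mx al%:M (c *: B) 0 (al *: N - (c * c') *: (B' *m B)).
  rewrite mulmx_block !mul0mx !addr0 !mul1mx; congr block_mx.
  all: rewrite ?mul_mx_scalar ?mul_scalar_mx.
    by rewrite -scalerDr scaleNr addNr scaler0.
  by rewrite -scalemxAl -scalemxAr scalerA mulNr scaleNr addrC [c * _]mulrC.
have := congr1 determinant elim_dl.
rewrite det_mulmx det_lblock det1 mul1r det_scalar det_ublock det_scalar => ->.
by rewrite mulrC.
Qed.

Section LowRankDeterminant.
Variable K : idomainType.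

Lemma size_det_affine_rows (p q : nat) (M : 'M[{poly K}]_(p + q)) :
  (forall i j, size (M (lshift q i) j) <= 2)%N ->
  (forall i j, size (M (rshift p i) j) <= 1)%N ->
  (size (\det M) <= p.+1)%N.
Proof.
move=> hup hdown; apply: (leq_trans (size_sum _ _ _)); apply/bigmax_leqP => s _.
rewrite mulr_sign; suff : (size (\prod_i M i (s i))%R <= p.+1)%N.
  by case: (odd_perm s); rewrite ?size_polyN.
rewrite big_split_ord /=; apply: (leq_trans (size_mul_leq _ _)).
have size_up : (size (\prod_(i < p) M (lshift q i) (s (lshift q i)))%R <= p.+1)%N.
  apply: (leq_trans (size_poly_prod_leq _ _)); rewrite card_ord leq_subLR.
  apply: (@leq_trans (\sum_(i < p) 2).+1); first by rewrite ltnS leq_sum.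
  by rewrite sum_nat_const card_ord; lia.
have size_down : (size (\prod_(i < q) M (rshift p i) (s (rshift p i)))%R <= 1)%N.
  apply: (leq_trans (size_poly_prod_leq _ _)); rewrite card_ord leq_subLR.
  apply: (@leq_trans (\sum_(i < q) 1).+1); first by rewrite ltnS leq_sum.
  by rewrite sum_nat_const card_ord; lia.
by rewrite -subn1 leq_subLR; apply: leq_trans (leq_add size_up size_down) _; rewrite addnC.
Qed.

Definition lowrank_det_poly d n (B' : 'M[K]_(n, d)) (B : 'M[K]_(d, n))
    (N : 'M[K]_n) : {poly K} :=
  \det (block_mx (1%:M : 'M[{poly K}]_d) (map_mx (fun x => 'X * x%:P) B)
          (map_mx polyC B') (map_mx polyC N)).

Lemma horner_lowrank_det_poly d n (B' : 'M[K]_(n, d)) B N r :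
  (lowrank_det_poly B' B N).[r] = \det (N - r *: (B' *m B)).
Proof.
rewrite /lowrank_det_poly -horner_evalE -det_map_mx map_block_mx.
have := det_scalar_block_mx 1 r 1 B B' N; rewrite !expr1n !mul1r mulr1 !scale1r => <-.
congr (\det (block_mx _ _ _ _)); apply/matrixP => i j; rewrite !mxE ?horner_evalE ?hornerE //.
all: by rewrite ?rmorph_nat /= ?horner_evalE ?hornerE.
Qed.

Lemma size_lowrank_det_poly d n (B' : 'M[K]_(n, d)) B N :
  (size (lowrank_det_poly B' B N) <= d.+1)%N.
Proof.
apply: size_det_affine_rows => i j; case: (split_ordP j) => j' ->.
- rewrite block_mxEul mxE; case: (_ == _) => /=; rewrite ?size_polyC ?size_poly0 ?oner_eq0 //.
  by case: (_ != _).
- rewrite block_mxEur mxE; apply: (leq_trans (size_mul_leq _ _)).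
  by rewrite size_polyX; have := size_polyC_leq1 (B i j'); case: (size _) => [|[]].
- by rewrite block_mxEdl mxE size_polyC_leq1.
- by rewrite block_mxEdr mxE size_polyC_leq1.
Qed.

End LowRankDeterminant.

Fixpoint words (T : eqType) (s : seq T) (m : nat) : seq (seq T) :=
  if m is m'.+1 then [seq x :: w | x <- s, w <- words s m'] else [:: [::]].

Lemma mem_words (T : eqType) (s w : seq T) : all (mem s) w -> w \in words s (size w).
Proof.
elim: w => [|x w IH] /=; first by rewrite inE.
by case/andP => xs ws; apply: (allpairs_f (fun y v => y :: v)) => //; apply: IH.
Qed.

Lemma horner_eq0_poly (F : numDomainType) (p : {poly F}) :
  (forall x, p.[x] = 0) -> p = 0.
Proof.
move=> p0; apply: (@roots_geq_poly_eq0 _ p [seq i%:R | i <- iota 0 (size p)]).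
- by apply/allP => x /mapP [i _ ->]; rewrite /root p0.
- by rewrite map_inj_uniq ?iota_uniq // => i j /eqP; rewrite eqr_nat => /eqP.
- by rewrite size_map size_iota.
Qed.

Lemma poly_eq_off_root (F : numDomainType) (p q Q : {poly F}) :
  Q != 0 -> (forall t, Q.[t] != 0 -> p.[t] = q.[t]) -> p = q.
Proof.
move=> Q0 pq; apply/eqP; rewrite -subr_eq0; apply/eqP; apply: (mulIf Q0).
rewrite mul0r; apply: horner_eq0_poly => t; rewrite hornerM hornerD hornerN.
by have [->|/pq ->] := eqVneq Q.[t] 0; rewrite ?mulr0 ?subrr ?mul0r.
Qed.

Section TowerCoefficients.
Variable F : numFieldType.

Fixpoint tower_coef (j : nat) : {poly F} * {poly F} :=
  if j is j'.+1 then
    ((tower_coef j').1 * 'X - (tower_coef j').2, (tower_coef j').1 * (4%:R^-1)%:P)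
  else (1, 0).

Local Notation a j := (tower_coef j).1.
Local Notation b j := (tower_coef j).2.

Lemma horner_tower_coefS_fst t j : (a j.+1).[t] = (a j).[t] * t - (b j).[t].
Proof. by rewrite /= !hornerE. Qed.

Lemma horner_tower_coefS_snd t j : (b j.+1).[t] = (a j).[t] / 4%:R.
Proof. by rewrite /= !hornerE. Qed.

Lemma tower_coef_spec j : [/\ a j \is monic, size (a j) = j.+1 & (size (b j) <= j)%N].
Proof.
elim: j => [|j [am asz bsz]] /=; first by rewrite monic1 size_poly1 size_poly0.
have sizeaX : size (a j * 'X) = j.+2 by rewrite size_mulX ?monic_neq0 // asz.
have sizeb : (size (- b j)%R < size (a j * 'X)%R)%N.
  by rewrite size_polyN sizeaX ltnS (leq_trans bsz).
split.
- by rewrite monicE lead_coefDl // lead_coefMX -monicE.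
- by rewrite size_polyDl.
- apply: (leq_trans (size_mul_leq _ _)); rewrite asz size_polyC.
  by case: (_ != _); rewrite ?addn1 ?addn0.
Qed.

Lemma tower_coef_neq0 j : a j != 0.
Proof. by case: (tower_coef_spec j) => /monic_neq0. Qed.

Definition tower_cross i j := b i * a j - b j * a i.

Lemma tower_crossSS i j : tower_cross i.+1 j.+1 = (4%:R^-1)%:P * tower_cross i j.
Proof. by rewrite /tower_cross /=; ring. Qed.

Lemma tower_cross_neq0 i j : (i < j)%N -> tower_cross i j != 0.
Proof.
have inv4_neq0 : (4%:R^-1 : F)%:P != 0 by rewrite polyC_eq0 invr_eq0 pnatr_eq0.
move=> /subnKC <-; move: (j - i.+1)%N => s.
elim: i => [|i IH]; last by rewrite addSn tower_crossSS mulf_neq0.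
by rewrite /tower_cross /= mul0r mulr1 sub0r oppr_eq0 mulf_neq0 ?tower_coef_neq0.
Qed.

Definition tower_discr N : {poly F} :=
  (\prod_(j < N.+1) a j) * \prod_(i < N.+1) \prod_(j < N.+1 | (i < j)%N) tower_cross i j.

Lemma tower_discr_neq0 N : tower_discr N != 0.
Proof.
rewrite mulf_neq0 //; apply/prodf_neq0 => i _; first exact: tower_coef_neq0.
by apply/prodf_neq0 => j; apply: tower_cross_neq0.
Qed.

Definition tower_ratio t j := (b j).[t] / (a j).[t].

Section GenericPoint.
Variables (N : nat) (t : F).
Hypothesis discr_t : (tower_discr N).[t] != 0.

Lemma tower_coef_horner_neq0 j : (j <= N)%N -> (a j).[t] != 0.
Proof.
move: discr_t; rewrite hornerM mulf_eq0 negb_or horner_prod => /andP [/prodf_neq0 aN _].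
by move=> jN; apply: (aN (Ordinal (jN : (j < N.+1)%N))).
Qed.

Lemma tower_ratio_inj : {in [pred j | j <= N]%N &, injective (tower_ratio t)}.
Proof.
suff neq i j : (i < j <= N)%N -> tower_ratio t i != tower_ratio t j.
  move=> i j; rewrite !inE => iN jN eqr; case: (ltngtP i j) => // [lij|lji].
    by have := neq i j; rewrite lij jN eqr eqxx => /(_ isT).
  by have := neq j i; rewrite lji iN eqr eqxx => /(_ isT).
move=> /andP [lij jN]; have iN : (i <= N)%N by apply: ltnW (leq_trans lij jN).
move: discr_t; rewrite hornerM mulf_eq0 negb_or => /andP [_].
rewrite horner_prod => /prodf_neq0 /(_ (Ordinal (iN : (i < N.+1)%N)) isT); rewrite horner_prod.
move=> /prodf_neq0 /(_ (Ordinal (jN : (j < N.+1)%N)) lij).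
rewrite /tower_cross /tower_ratio hornerD hornerN !hornerM; apply: contra => /eqP eqr.
rewrite -(divfK (tower_coef_horner_neq0 iN) (b i).[t]) eqr.
by rewrite -{2}(divfK (tower_coef_horner_neq0 jN) (b j).[t]) mulrAC subrr.
Qed.

End GenericPoint.
End TowerCoefficients.

Section HermitianPencil.
Variable R : realType.
Local Notation K := R[i].
Local Open Scope complex_scope.

Lemma adjmx0 m n : adjmx (0 : 'M[K]_(m, n)) = 0.
Proof. by apply/matrixP => i j; rewrite /adjmx !mxE conjc0. Qed.

Lemma adjmx_block m1 m2 n1 n2 (A : 'M[K]_(m1, n1)) (B : 'M_(m1, n2))
    (C : 'M_(m2, n1)) (D : 'M_(m2, n2)) :
  adjmx (block_mx A B C D) = block_mx (adjmx A) (adjmx C) (adjmx B) (adjmx D).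
Proof. by rewrite /adjmx map_block_mx tr_block_mx. Qed.

Definition hpart m (Y : 'M[K]_m) (e : K) : 'M_m :=
  2%:R^-1 *: (e^* *: Y + e *: adjmx Y).

Definition hpencil m (Y : 'M[K]_m) (e t a b : K) : K :=
  \det (a *: (t%:M - hpart Y e) - b *: defect Y).

Lemma hpart_block p m (B : 'M[K]_(p, m)) (Y : 'M_m) e :
  hpart (block_mx 0 B 0 Y) e =
  block_mx 0 ((2%:R^-1 * e^*) *: B) ((2%:R^-1 * e) *: adjmx B) (hpart Y e).
Proof.
rewrite /hpart adjmx_block !adjmx0 !scale_block_mx add_block_mx !scale_block_mx.
by rewrite !scaler0 !addr0 !add0r !scalerA scaler0.
Qed.

Lemma defect_block p m (B : 'M[K]_(p, m)) (Y : 'M_m) :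
  adjmx B *m B = defect Y -> defect (block_mx 0 B 0 Y) = block_mx 1%:M 0 0 0.
Proof.
move=> BB; rewrite /defect adjmx_block !adjmx0 mulmx_block !mul0mx !mulmx0 !addr0.
rewrite ?add0r (scalar_mx_block p m) opp_block_mx add_block_mx !subr0.
by rewrite BB /defect subrK subrr.
Qed.

(* Schur complement with respect to the top-left block of A(Y): since e e^* = 1,
   the off-diagonal blocks contribute a (a/4) B^* B = a (a/4) D_Y. *)
Lemma hpencil_block p m (B : 'M[K]_(p, m)) (Y : 'M_m) e t a b :
  adjmx B *m B = defect Y -> e * e^* = 1 ->
  (a * t - b) ^+ m * hpencil (block_mx 0 B 0 Y) e t a b =
  (a * t - b) ^+ p * (a ^+ m * hpencil Y e t (a * t - b) (a / 4%:R)).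
Proof.
move=> BB e_unit; rewrite /hpencil hpart_block defect_block //.
set c := - (a * (2%:R^-1 * e^*)); set c' := - (a * (2%:R^-1 * e)).
have -> : a *: (t%:M - block_mx 0 ((2%:R^-1 * e^*) *: B) ((2%:R^-1 * e) *: adjmx B)
                                  (hpart Y e)) - b *: block_mx 1%:M 0 0 0 =
    block_mx (a * t - b)%:M (c *: B) (c' *: adjmx B) (a *: (t%:M - hpart Y e)).
  rewrite (scalar_mx_block p m) !opp_block_mx !add_block_mx !scale_block_mx.
  rewrite opp_block_mx add_block_mx !scaler0 !oppr0 !addr0 !add0r !scalerN !scalerA.
  by rewrite !scaleNr scale_scalar_mx scalemx1 -raddfB.
have cc' : c * c' = a * (a / 4%:R) * (e * e^*) by rewrite /c /c'; field.
rewrite det_scalar_block_mx BB cc' e_unit mulr1 -detZ; congr (_ * \det _).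
by rewrite [RHS]scalerBr !scalerA [a * (a * t - b)]mulrC.
Qed.

Lemma hpencil_homog m (Y : 'M[K]_m) e t a b : a != 0 ->
  hpencil Y e t a b = a ^+ m * hpencil Y e t 1 (b / a).
Proof.
by move=> a0; rewrite /hpencil -detZ [in RHS]scalerBr !scalerA mulr1 mulrCA divff // mulr1.
Qed.

Lemma hpencil_lowrank m d (Y : 'M[K]_m) (B : 'M[K]_(d, m)) e t r :
  adjmx B *m B = defect Y ->
  hpencil Y e t 1 r = (lowrank_det_poly (adjmx B) B (t%:M - hpart Y e)).[r].
Proof. by move=> BB; rewrite horner_lowrank_det_poly /hpencil scale1r BB. Qed.

Lemma horner_char_poly_hpart m (Y : 'M[K]_m) e t :
  (char_poly (hpart Y e)).[t] = hpencil Y e t 1 0.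
Proof.
rewrite /hpencil scale1r scale0r subr0 /char_poly -horner_evalE -det_map_mx.
congr (\det _); apply/matrixP => i j; rewrite !mxE rmorphB rmorphMn /= !horner_evalE.
by rewrite hornerX hornerC.
Qed.

End HermitianPencil.

Section Tower.
Variable R : realType.
Local Notation K := R[i].
Local Open Scope complex_scope.
Local Notation a j := (tower_coef K j).1.
Local Notation b j := (tower_coef K j).2.

Variable T : nat -> sqmx R.
Hypothesis T_step : forall j, A_step (T j) (T j.+1).

Lemma hpencil_tower t k i :
  (forall j, (j <= k)%N -> (a (i + j)).[t] != 0) ->
  exists F G : K, [/\ F != 0, G != 0 & forall e, e * e^* = 1 ->
    F * hpencil (smat (T k)) e t (a i).[t] (b i).[t] =
    G * hpencil (smat (T 0)) e t (a (i + k)).[t] (b (i + k)).[t]].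
Proof.
elim: k i => [|k IH] i a_neq0; first by exists 1, 1; rewrite addn0 oner_neq0.
have ai0 : (a i).[t] != 0 by have := a_neq0 0%N isT; rewrite addn0.
have aSi0 : (a i.+1).[t] != 0 by rewrite -addn1 a_neq0.
have [|F [G [F0 G0 FG]]] := IH i.+1; first by move=> j jk; rewrite addSnnS a_neq0.
have [p [B [[_ [_ BB]] ->]]] := T_step k.
exists (F * (a i.+1).[t] ^+ sdim (T k)), ((a i.+1).[t] ^+ p * (a i).[t] ^+ sdim (T k) * G).
split; rewrite ?mulf_neq0 ?expf_neq0 // => e e_unit.
rewrite addnS -addSn -[RHS]mulrA -FG // horner_tower_coefS_fst horner_tower_coefS_snd /=.
rewrite -mulrA hpencil_block //; ring.
Qed.

Variables (n d : nat) (X : 'M[K]_n) (B0 : 'M[K]_(d, n)).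
Hypotheses (B0B0 : adjmx B0 *m B0 = defect X) (T0 : T 0 = SqMx X).

Let L e t := lowrank_det_poly (adjmx B0) B0 (t%:M - hpart X e).

Lemma horner_char_poly_tower t k : (forall j, (j <= k)%N -> (a j).[t] != 0) ->
  exists2 c : K, c != 0 & forall e, e * e^* = 1 ->
    (char_poly (hpart (smat (T k)) e)).[t] = c * (L e t).[tower_ratio t k].
Proof.
move=> a_neq0; have [|F [G [F0 G0 FG]]] := @hpencil_tower t k 0.
  by move=> j; rewrite add0n; apply: a_neq0.
exists (G / F * (a k).[t] ^+ n); first by rewrite !mulf_neq0 ?invr_eq0 ?expf_neq0 ?a_neq0.
move=> e e_unit; rewrite horner_char_poly_hpart; apply: (mulfI F0).
move: (FG e e_unit); rewrite T0 hornerC horner0 => ->.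
rewrite (hpencil_homog _ _ _ _ (a_neq0 k _)) // (hpencil_lowrank _ _ _ B0B0).
by rewrite /tower_ratio [G / F]mulrC -!mulrA mulVKf.
Qed.

Lemma char_poly_tower_window e1 e2 w0 : e1 * e1^* = 1 -> e2 * e2^* = 1 ->
  (forall j, (w0 <= j <= w0 + d)%N ->
     char_poly (hpart (smat (T j)) e1) = char_poly (hpart (smat (T j)) e2)) ->
  forall k, char_poly (hpart (smat (T k)) e1) = char_poly (hpart (smat (T k)) e2).
Proof.
move=> e1_unit e2_unit eq_window k; set N := maxn k (w0 + d).
apply: (poly_eq_off_root (tower_discr_neq0 K N)) => t discr_t.
pose P := L e1 t - L e2 t.
have diff_tower j : (j <= N)%N -> exists2 c : K, c != 0 &
    (char_poly (hpart (smat (T j)) e1)).[t] - (char_poly (hpart (smat (T j)) e2)).[t] =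
    c * P.[tower_ratio t j].
  move=> jN; have [|c c0 hc] := @horner_char_poly_tower t j.
    by move=> i ij; apply: (tower_coef_horner_neq0 discr_t); apply: leq_trans ij jN.
  exists c; first exact: c0.
  apply: etrans (congr2 (fun x y => x - y) (hc e1 e1_unit) (hc e2 e2_unit)) _.
  by rewrite -mulrBr /P hornerD (hornerN (L e2 t)).
have P0 : P = 0.
  apply: (@roots_geq_poly_eq0 _ P [seq tower_ratio t j | j <- iota w0 d.+1]).
  - apply/allP => x /mapP [j]; rewrite mem_iota => jw ->.
    have [|c c0 hc] := diff_tower j; first by rewrite /N; lia.
    have jw' : (w0 <= j <= w0 + d)%N by lia.
    have : c * P.[tower_ratio t j] = 0.
      rewrite -hc; apply/eqP; rewrite subr_eq0; apply/eqP.
      by rewrite [X in X.[t] = _](eq_window j jw').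
    by move/eqP; rewrite mulf_eq0 (negbTE c0).
  - rewrite map_inj_in_uniq ?iota_uniq // => i j; rewrite !mem_iota => iw jw.
    by apply: (tower_ratio_inj discr_t); rewrite inE /N; lia.
  - rewrite size_map size_iota (leq_trans (size_polyD _ _)) // geq_max.
    by rewrite size_lowrank_det_poly /= size_polyN size_lowrank_det_poly.
apply/eqP; rewrite -subr_eq0; have [c _ ->] := diff_tower k (leq_maxl _ _).
by rewrite P0 horner0 mulr0.
Qed.

End Tower.

Section Circularity.
Variable R : realType.
Local Notation K := R[i].
Local Open Scope complex_scope.

Lemma expiN (th : R) : expi (- th) = (expi th)^*.
Proof. by rewrite /expi cosN sinN. Qed.

Lemma mul_expi_conj (th : R) : expi th * (expi th)^* = 1.
Proof.
apply/eqP; rewrite eq_complex /= mulrN opprK -!expr2 cos2Dsin2 eqxx /=.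
by rewrite mulrN [sin th * _]mulrC addNr.
Qed.

Lemma expi_neq0 (th : R) : expi th != 0.
Proof. by apply: contra_eq_neq (mul_expi_conj th) => ->; rewrite mul0r eq_sym oner_eq0. Qed.

Lemma Hmx_hpart m (Y : 'M[K]_m) th : Hmx Y th = hpart Y (expi th).
Proof. by rewrite /Hmx /hpart expiN. Qed.

Lemma spectrum_Hmx m (Y : 'M[K]_m) th : spectrum (Hmx Y th) = spectrum (hpart Y (expi th)).
Proof. by rewrite Hmx_hpart. Qed.

Lemma spectrum_char_poly m (A B : 'M[K]_m) :
  char_poly A = char_poly B -> spectrum A = spectrum B.
Proof.
move=> AB; apply: functional_extensionality => z.
by rewrite /spectrum !eigenvalue_root_char AB.
Qed.

Lemma poly_eq0_on_expi (q : {poly K}) : (forall th : R, root q (expi th)) -> q = 0.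
Proof.
move=> q_expi; have cos_acos k : cos (acos (k.+1%:R^-1 : R)) = k.+1%:R^-1.
  rewrite acosK // in_itv /= invf_le1 ?ltr0Sn // ler1n andbT.
  by rewrite (le_trans (lerN10 _)) // invr_ge0 ler0n.
apply: (@roots_geq_poly_eq0 _ q [seq expi (acos k.+1%:R^-1) | k <- iota 0 (size q)]).
- by apply/allP => _ /mapP [k _ ->].
- rewrite map_inj_uniq ?iota_uniq // => i j /eqP; rewrite /expi eq_complex /= => /andP [/eqP].
  by rewrite !cos_acos => /invr_inj /eqP; rewrite eqr_nat => /eqP [].
- by rewrite size_map size_iota.
Qed.

(* e^m char_poly (hpart Y e), as a polynomial in t whose coefficients are
   polynomials in e; valid when e e^* = 1. *)
Definition hpart_char_poly2 m (Y : 'M[K]_m) : {poly {poly K}} :=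
  \det ((('X : {poly K})%:P * 'X)%:M - map_mx (fun x => (x / 2%:R)%:P%:P) Y
        - map_mx (fun x => (('X : {poly K}) ^+ 2 * (x / 2%:R)%:P)%:P) (adjmx Y)).

Lemma map_hpart_char_poly2 m (Y : 'M[K]_m) e : e * e^* = 1 ->
  map_poly (horner_eval e) (hpart_char_poly2 Y) = (e ^+ m)%:P * char_poly (hpart Y e).
Proof.
move=> e_unit; rewrite /hpart_char_poly2 -det_map_mx /char_poly polyC_exp -detZ.
congr (\det _); apply/matrixP => i j; rewrite !mxE.
rewrite !rmorphB /= !rmorphMn /= !rmorphM /= !map_polyC !map_polyX /= !horner_evalE.
rewrite !hornerX !hornerC mulrBr -mulrnAr -!polyCM -addrA -opprD -polyCD.
congr (_ - _%:P).
rewrite [RHS](_ : _ = 2%:R^-1 * ((e * e^*) * Y i j + e * e * (Y j i)^*)); last by ring.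
by rewrite e_unit; ring.
Qed.

(* The product over p in F of (e^m char_poly (hpart Y e) - e^m p) vanishes on the
   infinite unit circle, hence identically, so one factor is identically zero. *)
Lemma char_poly_hpart_const m (Y : 'M[K]_m) (F : seq {poly K}) :
  (forall th : R, char_poly (hpart Y (expi th)) \in F) ->
  exists p, forall th : R, char_poly (hpart Y (expi th)) = p.
Proof.
move=> inF; pose D p := hpart_char_poly2 Y - ('X%:P) ^+ m * map_poly polyC p.
have evalD th p : map_poly (horner_eval (expi th)) (D p) =
    ((expi th) ^+ m)%:P * (char_poly (hpart Y (expi th)) - p).
  rewrite rmorphB rmorphM rmorphXn /= map_hpart_char_poly2 ?mul_expi_conj //.
  rewrite map_polyC /= horner_evalE hornerX mulrBr -polyC_exp; congr (_ - _ * _).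
  by apply/polyP => i; rewrite !coef_map /= horner_evalE hornerC.
have D0 : \prod_(p <- F) D p = 0.
  apply/polyP => i; rewrite coef0; apply: poly_eq0_on_expi => th.
  rewrite /root -horner_evalE -coef_map rmorph_prod (big_rem _ (inF th)) /=.
  by rewrite evalD subrr mulr0 mul0r coef0.
move/eqP: D0; rewrite prodf_seq_eq0 => /hasP [p _ /eqP Dp0].
exists p => th; apply/eqP; move: (evalD th p); rewrite Dp0 rmorph0 => /esym/eqP.
by rewrite mulf_eq0 polyC_eq0 expf_eq0 (negbTE (expi_neq0 th)) andbF subr_eq0.
Qed.

Lemma circularity_char_poly_finite m (Y : 'M[K]_m) : circularity Y ->
  exists F : seq {poly K}, forall th : R, char_poly (hpart Y (expi th)) \in F.
Proof.
move=> circY; have [r0 p0E] := closed_field_poly_normal (char_poly (hpart Y (expi 0))).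
exists [seq \prod_(z <- s) ('X - z%:P) | s <- words r0 m] => th.
have [r pE] := closed_field_poly_normal (char_poly (hpart Y (expi th))).
rewrite (monicP (char_poly_monic _)) scale1r in pE.
rewrite (monicP (char_poly_monic _)) scale1r in p0E.
have size_r : size r = m.
  by have := size_char_poly (hpart Y (expi th)); rewrite pE size_prod_XsubC => -[].
rewrite pE; apply: map_f; rewrite -size_r; apply: mem_words; apply/allP => z zr.
have : spectrum (Hmx Y th) z.
  by rewrite /spectrum Hmx_hpart eigenvalue_root_char pE root_prod_XsubC.
by rewrite (circY th 0) /spectrum Hmx_hpart eigenvalue_root_char p0E root_prod_XsubC.
Qed.

Lemma circularityP m (Y : 'M[K]_m) : circularity Y <->
  forall th1 th2 : R, char_poly (hpart Y (expi th1)) = char_poly (hpart Y (expi th2)).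
Proof.
split=> [/circularity_char_poly_finite [F /char_poly_hpart_const [p cst]] th1 th2|].
  exact: etrans (cst th1) (esym (cst th2)).
move=> cst th1 th2; apply: etrans (spectrum_Hmx Y th1) _.
by apply: etrans _ (esym (spectrum_Hmx Y th2)); apply: spectrum_char_poly.
Qed.

End Circularity.

Lemma circ_tower_window (R : realType) n (X : 'M[R[i]]_n) (T : nat -> sqmx R) w0 :
  pi_tower X T ->
  (forall j, (w0 <= j <= w0 + \rank (defect X))%N -> circ (T j)) ->
  forall k, circ (T k).
Proof.
move=> [T0 T_step] circ_window k.
have := T_step 0%N; rewrite T0 => -[d [B0 [[rankd [_ B0B0]] _]]].
rewrite -rankd in circ_window; rewrite /circ circularityP => th1 th2.
apply: (char_poly_tower_window T_step B0B0 T0 (mul_expi_conj th1) (mul_expi_conj th2)).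
by move=> j /circ_window; rewrite /circ circularityP.
Qed.

Theorem mainTheorem5 (R : realType) (n : nat) (X : 'M[R[i]]_n)
    (T : nat -> sqmx R) :
  contraction X -> pi_tower X T ->
  let d := \rank (defect X) in
  ((forall j, circ (T j)) <-> (forall j, (1 <= j <= d.+1)%N -> circ (T j))) /\
  ((forall j, circ (T j)) <-> (forall j, (j <= d)%N -> circ (T j))).
Proof.
(* Contractivity is what makes the tower exist; pi_tower already provides it. *)
move=> _ tower d; split; split=> [circ_all j _ | circ_window]; try exact: circ_all.
- by apply: (circ_tower_window (w0 := 1) tower) => j jw; apply: circ_window; rewrite /d; lia.
- by apply: (circ_tower_window (w0 := 0) tower) => j jw; apply: circ_window; rewrite /d; lia.
Qed.
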